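(* Let $G=(\Sigma,S,s_0,\delta)$ be a regular commutative grammar, let $n\in\mathbb{N}$, and let $D$ be a run of $G$ such that $\|D\|>1+n|\delta|$. Then $D=D_1+nC$, where $D_1$ is a run of $G$, $C$ is a simple cycle, and $\mathrm{supp}(D_1)=\mathrm{supp}(D)$.
   Context: For $v\in\mathbb{N}^X$, $|v|=\sum_x v(x)$ and $\|v\|=\max_x v(x)$. A commutative grammar is $G=(\Sigma,S,s_0,\delta)$ with finite alphabet $\Sigma$, finite state set $S$, $s_0\in S$, and a finite set $\delta\subseteq S\times\mathbb{N}^\Sigma\times\mathbb{N}^S$ of transitions $\tau=(s,a,t)$ ($\mathrm{source}(\tau)=s$, $\mathrm{out}(\tau)=a$, $\mathrm{target}(\tau)=t$); every state is the source of some transition, and every transition has $|a|\le1$, $|t|\le2$. It is regular if $|t|\le1$ for all transitions. For $D\in\mathbb{N}^\delta$ let $\mathrm{source}(D)(s)=\sum_{\mathrm{source}(\tau)=s}D(\tau)$, $\mathrm{target}(D)=\sum_\tau D(\tau)\mathrm{target}(\tau)$, $\mathrm{supp}(D)=\{s:\mathrm{source}(D)(s)>0\}$. $D$ is connected from $s$ if every $t\in\mathrm{supp}(D)$ equals $s$ or is reachable by transitions $\tau_1,\ldots,\tau_m$ with $D(\tau_i)>0$, $\mathrm{source}(\tau_1)=s$, $\mathrm{source}(\tau_{i+1})\in\mathrm{target}(\tau_i)$, $t\in\mathrm{target}(\tau_m)$. $D$ is a cycle from $s$ if it is connected from $s$ and $\mathrm{source}(D)=\mathrm{target}(D)$; a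 cycle is a cycle from some state. $D$ is a run if it is connected from $s_0$ and $\mathrm{source}(D)=\mathrm{target}(D)+\{s_0\}$. A simple cycle is a nonzero cycle that cannot be written as a sum of smaller nonzero cycles. *)

From mathcomp Require Import all_boot.
Set Implicit Arguments. Unset Strict Implicit. Unset Printing Implicit Defensive.

Definition vsize (X : finType) (v : X -> nat) : nat := \sum_(x : X) v x.
Definition vmax (X : finType) (v : X -> nat) : nat := \max_(x : X) v x.

(* The finite set of transitions delta is represented
   by a finite type [Tr] of transitions together with an injective map
   tau |-> (source tau, out tau, target tau) into S x N^Sigma x N^S. *)
Record grammar := Grammar {
  Sig : finType;
  St : finType;
  s0 : St;
  Tr : finType;
  source : Tr -> St;
  out : Tr -> {ffun Sig -> nat};
  target : Tr -> {ffun St -> nat};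
  trans_inj : injective (fun tau => (source tau, out tau, target tau));
  every_state_source : forall s : St, exists tau : Tr, source tau = s;
  out_small : forall tau, vsize (out tau) <= 1;
  target_small : forall tau, vsize (target tau) <= 2
}.

Section Defs.
Variable G : grammar.

Definition regular : Prop := forall tau : Tr G, vsize (target tau) <= 1.

Definition ndelta : nat := #|Tr G|.

Definition tvec := {ffun Tr G -> nat}.

Definition sourceD (D : tvec) : {ffun St G -> nat} :=
  [ffun s => \sum_(tau : Tr G | source tau == s) D tau].
Definition targetD (D : tvec) : {ffun St G -> nat} :=
  [ffun s => \sum_(tau : Tr G) D tau * target tau s].
Definition supp (D : tvec) : {set St G} := [set s | 0 < sourceD D s].

Definition stepD (D : tvec) : rel (St G) :=
  fun s t => [exists tau : Tr G, [&& 0 < D tau, source tau == s & 0 < target tau t]].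

Definition connected_from (D : tvec) (s : St G) : Prop :=
  forall t, t \in supp D -> connect (stepD D) s t.

Definition cycle_from (D : tvec) (s : St G) : Prop :=
  connected_from D s /\ sourceD D = targetD D.
Definition is_cycle (D : tvec) : Prop := exists s, cycle_from D s.

Definition is_run (D : tvec) : Prop :=
  connected_from D (s0 G) /\
  sourceD D = [ffun s => targetD D s + (s == s0 G)].

Definition simple_cycle (C : tvec) : Prop :=
  is_cycle C /\ C != [ffun => 0] /\
  ~ (exists cs : seq tvec,
       [/\ 2 <= size cs,
           (forall C', C' \in cs -> is_cycle C' /\ C' != [ffun => 0]) &
           C = [ffun tau => \sum_(C' <- cs) C' tau]]).

End Defs.

From mathcomp Require Import all_boot zify.
Set Implicit Arguments. Unset Strict Implicit. Unset Printing Implicit Defensive.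

(* Call a transition heavy when D uses it more than n times, and pick tau with
   D(tau) > 1 + n|delta|.  Some target of tau reaches source(tau) along heavy
   transitions: otherwise, on the set U of states that do, the flow of D out
   of U is at least D(tau) while the flow into U is carried by light
   transitions and is at most n|delta|, which contradicts the balance of a run
   (an excess of at most 1, at s0).  Hence some nonempty set of states is
   closed under heavy steps.  In a regular grammar every transition has at
   most one target, so on a minimal such set a choice of one heavy transition
   per state hits every state, which gives a nonempty balanced set of heavy
   transitions.  A minimal such set E is a simple cycle: its indicator is
   connected because the part reachable from one of its transitions is again
   balanced, and any cycle below it is the indicator of a smaller such set.
   Since every transition of E is used more than n times, D - n 1_E still
   uses all transitions of D and is a run with the same support. *)

Lemma leq_sum_eq (I : finType) (f g : I -> nat) :
  (forall i, f i <= g i) -> \sum_i g i <= \sum_i f i -> f =1 g.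
Proof.
move=> fg sum_gf.
have split_g : \sum_i g i = \sum_i f i + \sum_i (g i - f i).
  by rewrite -big_split; apply: eq_bigr => i _ /=; rewrite subnKC.
have : \sum_i (g i - f i) == 0 by lia.
rewrite sum_nat_eq0 => /forallP gf0 i.
by have := gf0 i; have := fg i; lia.
Qed.

Lemma sum_nat_gt0 (I : finType) (P : pred I) (F : I -> nat) :
  (0 < \sum_(i | P i) F i) = [exists i, P i && (0 < F i)].
Proof.
rewrite lt0n sum_nat_eq0 negb_forall.
by apply: eq_existsb => i; rewrite negb_imply lt0n.
Qed.

Lemma vmax_gt (X : finType) (v : X -> nat) m : m < vmax v -> exists x, m < v x.
Proof.
case: (boolP [exists x, m < v x]) => [/existsP // | /existsPn small].
rewrite ltnNge => /bigmax_leqP []; move=> x _.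
by rewrite leqNgt small.
Qed.

Section Cycles.
Variable G : grammar.
Implicit Types (X D C : tvec G) (e : Tr G) (E H : {set Tr G}) (U W : {set St G}).

Definition balanced X : bool := sourceD X == targetD X.

Definition tindicator E : tvec G := [ffun e => nat_of_bool (e \in E)].

Definition restrict_reachable X (s : St G) : tvec G :=
  [ffun e => if connect (stepD X) s (source e) then X e else 0].

Lemma stepD_tindicator E u w :
  stepD (tindicator E) u w = [exists e, [&& e \in E, source e == u & 0 < target e w]].
Proof. by apply: eq_existsb => e; rewrite ffunE lt0b. Qed.

Lemma sum_sourceD X (P : pred (St G)) :
  \sum_(u | P u) sourceD X u = \sum_e X e * P (source e).
Proof.
under eq_bigr do rewrite ffunE big_mkcond.
rewrite exchange_big /=; apply: eq_bigr => e _.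
case Pe: (P (source e)).
  rewrite (bigD1 (source e)) //= eqxx big1 ?addn0 ?muln1 // => u /andP[_ u_ne].
  by rewrite eq_sym (negbTE u_ne).
by rewrite muln0 big1 // => u Pu; case: eqP => // eu; rewrite eu Pu in Pe.
Qed.

Lemma sum_targetD X (P : pred (St G)) :
  \sum_(u | P u) targetD X u = \sum_e X e * \sum_(u | P u) target e u.
Proof.
under eq_bigr do rewrite ffunE.
by rewrite exchange_big /=; apply: eq_bigr => e _; rewrite big_distrr.
Qed.

Lemma sum_sourceDT X : \sum_u sourceD X u = \sum_e X e.
Proof. by rewrite (sum_sourceD X predT); apply: eq_bigr => e _; rewrite muln1. Qed.

Lemma sum_targetDT X : \sum_u targetD X u = \sum_e X e * vsize (target e).
Proof. exact: (sum_targetD X predT). Qed.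

Section Regular.
Hypothesis regG : regular G.

Lemma sum_target_regular e (P : pred (St G)) :
  \sum_(u | P u) target e u = [exists u, P u && (0 < target e u)].
Proof.
rewrite -sum_nat_gt0.
have : \sum_(u | P u) target e u <= 1.
  apply: leq_trans (regG e); rewrite /vsize [leqRHS](bigID P) /=; exact: leq_addr.
by case: (\sum_(u | P u) _) => [|[]].
Qed.

Lemma sum_targetD_leq X : \sum_u targetD X u <= \sum_u sourceD X u.
Proof.
rewrite sum_sourceDT sum_targetDT; apply: leq_sum => e _.
by rewrite -[leqRHS]muln1 leq_mul2l regG orbT.
Qed.

Lemma balanced_vsize_target X e : balanced X -> 0 < X e -> vsize (target e) = 1.
Proof.
move=> /eqP balX Xe_gt0.
have fg : forall e, X e * vsize (target e) <= X e.
  by move=> e'; rewrite -[leqRHS]muln1 leq_mul2l regG orbT.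
have := leq_sum_eq fg _ e; rewrite -sum_sourceDT -sum_targetDT balX leqnn.
have := regG e; case: (vsize _) => [|[|//]] _; last by rewrite muln1.
by rewrite muln0 => /(_ isT) X0; rewrite -X0 in Xe_gt0.
Qed.

Lemma balanced_of_sourceD_leq X :
  (forall u, sourceD X u <= targetD X u) -> balanced X.
Proof.
move=> st; apply/eqP/ffunP.
exact: (leq_sum_eq st (sum_targetD_leq X)).
Qed.

Lemma balanced_restrict_reachable X s :
  balanced X -> balanced (restrict_reachable X s).
Proof.
move=> balX; set R := restrict_reachable X s.
have RX e : R e <= X e by rewrite ffunE; case: ifP.
have target_le u : targetD R u <= sourceD R u.
  case reach_u: (connect (stepD X) s u).
    apply: (@leq_trans (targetD X u)).
      by rewrite !ffunE; apply: leq_sum => e _; rewrite leq_mul2r RX orbT.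
    rewrite -(eqP balX) !ffunE; apply/eq_leq.
    by apply: eq_bigr => e /eqP src_e; rewrite ffunE src_e reach_u.
  rewrite ffunE big1 // => e _; rewrite ffunE.
  case: ifP => [reach_e|]; last by rewrite mul0n.
  case: (posnP (target e u)) => [->|tgt_u]; first by rewrite muln0.
  case: (posnP (X e)) => [->|Xe]; first by rewrite mul0n.
  move/negP: reach_u; case; apply: (connect_trans reach_e); apply: connect1.
  by apply/existsP; exists e; rewrite Xe eqxx tgt_u.
apply/eqP/ffunP => u; symmetry; apply: (leq_sum_eq target_le) u.
rewrite sum_sourceDT sum_targetDT; apply/eq_leq/eq_bigr => e _.
case: (posnP (R e)) => [->|Re]; first by rewrite mul0n.
by rewrite (balanced_vsize_target balX) ?muln1 // (leq_trans Re (RX e)).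
Qed.

Definition target_meets U e : bool := [exists u in U, 0 < target e u].

Lemma run_cut_flow D U : is_run D ->
  \sum_(e | (source e \in U) && ~~ target_meets U e) D e =
  \sum_(e | (source e \notin U) && target_meets U e) D e + (s0 G \in U).
Proof.
move=> [_ /ffunP runD].
have flow_U : \sum_e D e * (source e \in U) =
              \sum_e D e * target_meets U e + (s0 G \in U).
  rewrite -(sum_sourceD D (fun u => u \in U)).
  under eq_bigr do rewrite runD ffunE.
  rewrite big_split /= sum_targetD; congr (_ + _).
    by apply: eq_bigr => e _; rewrite sum_target_regular.
  rewrite big_mkcond (bigD1 (s0 G)) //= eqxx big1 ?addn0; first by case: ifP.
  by move=> u /negbTE ->; case: ifP.
have edgewise : \sum_(e | (source e \in U) && ~~ target_meets U e) D e +
                \sum_e D e * target_meets U e =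
                \sum_(e | (source e \notin U) && target_meets U e) D e +
                \sum_e D e * (source e \in U).
  rewrite big_mkcond [X in _ = X + _]big_mkcond -!big_split; apply: eq_bigr => e _ /=.
  by case: (source e \in U); case: (target_meets U e); rewrite /= ?muln0 ?muln1 ?addn0.
lia.
Qed.

Definition heavy n D : {set Tr G} := [set e | n < D e].

Lemma heavy_return_path n D tau : is_run D -> 1 + n * ndelta G < D tau ->
  exists2 w, 0 < target tau w &
    connect (stepD (tindicator (heavy n D))) w (source tau).
Proof.
move=> runD big_tau; set hstep := stepD _.
case: (boolP [exists w, (0 < target tau w) && connect hstep w (source tau)]).
  by move=> /existsP [w /andP[]]; exists w.
move=> /existsPn no_return; exfalso.
pose U := [set u | connect hstep u (source tau)].
have out_tau : D tau <= \sum_(e | (source e \in U) && ~~ target_meets U e) D e.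
  rewrite (bigD1 tau) /= ?leq_addr // inE connect0 /=.
  apply/existsP => -[w /andP[]]; rewrite inE => wU tgt_w.
  by have := no_return w; rewrite tgt_w wU.
have light_in e : (source e \notin U) && target_meets U e -> D e <= n.
  move=> /andP[src_out /existsP[u /andP[uU tgt_u]]]; rewrite leqNgt.
  apply: contra src_out => heavy_e; rewrite inE in uU; rewrite inE.
  apply: connect_trans (connect1 _) uU; rewrite /hstep stepD_tindicator.
  by apply/existsP; exists e; rewrite inE heavy_e eqxx tgt_u.
have in_small : \sum_(e | (source e \notin U) && target_meets U e) D e <= n * ndelta G.
  apply: (@leq_trans (\sum_(e | (source e \notin U) && target_meets U e) n)).
    exact: leq_sum light_in.
  by rewrite sum_nat_const mulnC leq_mul2l max_card orbT.
have := run_cut_flow U runD; case: (s0 G \in U) => /=; lia.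
Qed.

Definition step_closed H W : bool :=
  [forall u in W, [exists w in W, stepD (tindicator H) u w]].

Definition cycle_set H E : bool :=
  [&& E != set0, E \subset H & balanced (tindicator E)].

Lemma closed_of_return H tau w : tau \in H -> 0 < target tau w ->
  connect (stepD (tindicator H)) w (source tau) ->
  exists W, (W != set0) && step_closed H W.
Proof.
set hstep := stepD _ => tauH tgt_w w_tau.
exists [set u | connect hstep w u && connect hstep u (source tau)].
apply/andP; split.
  by apply/set0Pn; exists (source tau); rewrite inE w_tau connect0.
apply/forallP => u; apply/implyP; rewrite inE => /andP[w_u u_tau].
case: (eqVneq u (source tau)) => [->|u_ne].
  apply/existsP; exists w; rewrite inE connect0 w_tau /hstep stepD_tindicator.
  by apply/existsP; exists tau; rewrite tauH eqxx tgt_w.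
move/connectP: u_tau => [[|x p] /= path_u last_u]; first by rewrite last_u eqxx in u_ne.
move/andP: path_u => [u_x path_x]; apply/existsP; exists x.
rewrite inE (connect_trans w_u (connect1 u_x)) /=; apply/andP; split; last exact: u_x.
by apply/connectP; exists p.
Qed.

Lemma cycle_set_of_closed H W :
  (W != set0) && step_closed H W -> exists E, cycle_set H E.
Proof.
move=> PW.
have [{PW}W] :=
  @ex_minset _ (fun W => (W != set0) && step_closed H W) (ex_intro _ W PW).
move=> /minsetP[/andP[W_ne W_closed] W_min].
have choice u : exists e, source e = u /\
    (u \in W -> e \in H /\ exists2 w, w \in W & 0 < target e w).
  case: (boolP (u \in W)) => uW; last first.
    by have [e src_e] := every_state_source u; exists e.
  have := forallP W_closed u; rewrite uW /= => /existsP[w /andP[wW]].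
  rewrite stepD_tindicator => /existsP[e /and3P[eH /eqP src_e tgt_w]].
  by exists e; split=> // _; split=> //; exists w.
have [f f_spec] := fin_all_exists choice.
have f_src u : source (f u) = u by case: (f_spec u).
(* The targets of the chosen transitions form a closed subset of W. *)
have hit w : w \in W -> exists2 u, u \in W & 0 < target (f u) w.
  pose W' := [set x in W | [exists u in W, 0 < target (f u) x]].
  have W'W : W' \subset W by apply/subsetP => x; rewrite inE => /andP[].
  suff /W_min/(_ W'W) W'_eq : (W' != set0) && step_closed H W'.
    move=> wW; have : w \in W' by rewrite W'_eq.
    by rewrite inE => /andP[_ /existsP[u /andP[uW tgt]]]; exists u.
  have /set0Pn[u0 u0W] := W_ne; have [_ [x xW tgt_x]] := (f_spec u0).2 u0W.
  apply/andP; split.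
    by apply/set0Pn; exists x; rewrite inE xW; apply/existsP; exists u0; rewrite u0W.
  apply/forallP => y; apply/implyP; rewrite inE => /andP[yW _].
  have [fyH [z zW tgt_z]] := (f_spec y).2 yW; apply/existsP; exists z.
  rewrite inE zW stepD_tindicator /=; apply/andP; split.
    by apply/existsP; exists y; rewrite yW.
  by apply/existsP; exists (f y); rewrite fyH f_src eqxx.
pose E := f @: W.
have in_E e : (e \in E) = (source e \in W) && (e == f (source e)).
  apply/imsetP/andP => [[u uW ->]|[eW /eqP ->]]; last by exists (source e).
  by rewrite f_src uW.
exists E; apply/and3P; split.
- by have /set0Pn[u uW] := W_ne; apply/set0Pn; exists (f u); rewrite in_E f_src uW eqxx.
- apply/subsetP => e; rewrite in_E => /andP[eW /eqP ->].
  by have [] := (f_spec (source e)).2 eW.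
apply: balanced_of_sourceD_leq => v.
have -> : sourceD (tindicator E) v = (v \in W).
  rewrite ffunE (bigD1 (f v)) ?f_src //= big1 ?addn0 => [|e /andP[/eqP src_e e_ne]].
    by rewrite ffunE in_E f_src eqxx andbT.
  by rewrite ffunE in_E src_e (negbTE e_ne) andbF.
case: (boolP (v \in W)) => // /hit[u uW tgt_v].
rewrite ffunE (bigD1 (f u)) //= ffunE in_E f_src uW eqxx mul1n.
exact: leq_trans tgt_v (leq_addr _ _).
Qed.

Lemma tindicator_of_leq X E :
  (forall e, X e <= tindicator E e) -> X = tindicator [set e | 0 < X e].
Proof.
move=> X_le; apply/ffunP => e; have := X_le e; rewrite !ffunE inE.
by case: (e \in E); case: (X e) => [|[]].
Qed.

Lemma simple_cycle_of_minset H E :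
  minset (cycle_set H) E -> simple_cycle (tindicator E).
Proof.
move=> /minsetP[/and3P[E_ne EH E_bal] E_min]; set C := tindicator E.
have /set0Pn[e0 e0E] := E_ne; set s := source e0.
have reach_all e : e \in E -> connect (stepD C) s (source e).
  pose R := [set e in E | connect (stepD C) s (source e)].
  have RE : R \subset E by apply/subsetP => e'; rewrite inE => /andP[].
  have R_cyc : cycle_set H R.
    apply/and3P; split; first by apply/set0Pn; exists e0; rewrite inE e0E connect0.
      exact: subset_trans RE EH.
    suff -> : tindicator R = restrict_reachable C s by exact: balanced_restrict_reachable.
    by apply/ffunP => e'; rewrite !ffunE inE; case: connect; rewrite ?andbT ?andbF.
  move=> eE; have : e \in R by rewrite (E_min R R_cyc RE).
  by rewrite inE => /andP[].
split.
  exists s; split; last exact/eqP.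
  move=> t; rewrite inE ffunE sum_nat_gt0 => /existsP[e /andP[/eqP <- Ce]].
  by apply: reach_all; rewrite ffunE lt0b in Ce.
split; first by apply/eqP => /ffunP/(_ e0); rewrite !ffunE e0E.
move=> [[|C1 [|C2 Cs]] [// _ Cs_cyc C_sum]].
have [C1_cyc C1_ne] := Cs_cyc C1 (mem_head _ _).
have [_ C2_ne] : is_cycle C2 /\ C2 != [ffun => 0].
  by apply: Cs_cyc; rewrite !inE eqxx orbT.
have C_sumE e : C e = C1 e + (C2 e + \sum_(C' <- Cs) C' e).
  by rewrite {1}C_sum ffunE !big_cons.
have C1_le e : C1 e <= C e by rewrite C_sumE leq_addr.
have C1_eq := tindicator_of_leq C1_le; set E1 := [set e | 0 < C1 e] in C1_eq.
have E1E : E1 \subset E.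
  by apply/subsetP => e; rewrite inE => /leq_trans/(_ (C1_le e)); rewrite ffunE lt0b.
have E1_cyc : cycle_set H E1.
  apply/and3P; split; last 1 first.
  - by case: C1_cyc => x [_ /eqP]; rewrite C1_eq.
  - apply: contra C1_ne => /eqP E1_0; apply/eqP/ffunP => e.
    by rewrite C1_eq E1_0 !ffunE inE.
  - exact: subset_trans E1E EH.
have C1C : C1 = C by rewrite C1_eq (E_min E1 E1_cyc E1E).
move/negP: C2_ne; apply; apply/eqP/ffunP => e; rewrite ffunE.
have := C_sumE e; rewrite C1C -{1}[C e]addn0 => /addnI/esym/eqP.
by rewrite addn_eq0 => /andP[/eqP].
Qed.

Lemma exists_minimal_heavy_cycle_set n D tau : is_run D -> 1 + n * ndelta G < D tau ->
  exists E, minset (cycle_set (heavy n D)) E.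
Proof.
move=> runD big_tau.
have tau_heavy : tau \in heavy n D.
  have : 0 < ndelta G by apply/card_gt0P; exists tau.
  by rewrite inE; nia.
have [w tgt_w w_tau] := heavy_return_path runD big_tau.
have [W PW] := closed_of_return tau_heavy tgt_w w_tau.
have [E0 E0_cyc] := cycle_set_of_closed PW.
by have [E minE] := ex_minset (ex_intro _ E0 E0_cyc); exists E.
Qed.

End Regular.

Lemma run_sub_cycle n D D1 C : is_run D -> balanced C ->
  D = [ffun e => D1 e + n * C e] -> (forall e, 0 < C e -> 0 < D1 e) ->
  is_run D1 /\ supp D1 = supp D.
Proof.
move=> [D_conn /ffunP D_run] /eqP /ffunP C_bal D_eq C_D1.
have D1_pos e : (0 < D1 e) = (0 < D e).
  rewrite D_eq ffunE; case: (posnP (C e)) => [->|/C_D1 D1e].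
    by rewrite muln0 addn0.
  by rewrite D1e ltn_addr.
have sourceD_eq s : sourceD D s = sourceD D1 s + n * sourceD C s.
  rewrite !ffunE big_distrr -big_split; apply: eq_bigr => e _.
  by rewrite D_eq ffunE.
have targetD_eq s : targetD D s = targetD D1 s + n * targetD C s.
  rewrite !ffunE big_distrr -big_split; apply: eq_bigr => e _.
  by rewrite D_eq ffunE mulnDl -mulnA.
have step_eq : stepD D1 =2 stepD D.
  by move=> x y; apply: eq_existsb => e; rewrite D1_pos.
have supp_eq : supp D1 = supp D.
  apply/setP => s; rewrite !inE !ffunE !sum_nat_gt0.
  by apply: eq_existsb => e; rewrite D1_pos.
split=> //; split.
  by move=> t; rewrite supp_eq (eq_connect step_eq); exact: D_conn.
apply/ffunP => s; rewrite [RHS]ffunE.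
have := D_run s; rewrite sourceD_eq [X in _ = X]ffunE targetD_eq C_bal addnAC.
exact: addIn.
Qed.

End Cycles.

Theorem lemma5 (G : grammar) (n : nat) (D : tvec G) :
  regular G -> is_run D -> 1 + n * ndelta G < vmax D ->
  exists (D1 C : tvec G),
    [/\ D = [ffun tau => D1 tau + n * C tau],
        is_run D1, simple_cycle C & supp D1 = supp D].
Proof.
move=> regG runD /vmax_gt[tau big_tau].
have [E minE] := exists_minimal_heavy_cycle_set regG runD big_tau.
have /minsetP[/and3P[_ E_heavy E_bal] _] := minE.
set C := tindicator E; pose D1 := [ffun e => D e - n * C e].
have nC_lt e : 0 < C e -> n * C e < D e.
  rewrite ffunE lt0b => eE; have := subsetP E_heavy e eE.
  by rewrite inE eE muln1.
have nC_le e : n * C e <= D e.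
  by case: (posnP (C e)) => [->|/nC_lt/ltnW //]; rewrite muln0.
have D_eq : D = [ffun e => D1 e + n * C e].
  by apply/ffunP => e; rewrite ffunE [D1 e]ffunE subnK.
have D1_pos e : 0 < C e -> 0 < D1 e by move=> /nC_lt; rewrite [D1 e]ffunE subn_gt0.
have [D1_run D1_supp] := run_sub_cycle runD E_bal D_eq D1_pos.
by exists D1, C; split=> //; exact: simple_cycle_of_minset minE.
Qed.
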